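(* Let $R$ be a commutative ring, $S$ a multiplicative subset of $R$, and let $M$ and $N$ be $u$-$S$-coherent submodules of a $u$-$S$-coherent $R$-module. Then $M+N$ is $u$-$S$-coherent if and only if $M\cap N$ is $u$-$S$-coherent.
   Context: A multiplicative subset $S$ contains $1$ and is closed under products. $M$ is $S$-finite with respect to $s\in S$ if there is a finitely generated submodule $F\subseteq M$ with $sM\subseteq F$. $M$ is $u$-$S$-finitely presented with respect to $s$ if there is an exact sequence $0\to T_1\to F\to M\to T_2\to 0$ with $F$ finitely presented and $sT_1=sT_2=0$. $M$ is $u$-$S$-coherent if there is $s\in S$ such that $M$ is $S$-finite with respect to $s$ and every finitely generated submodule of $M$ is $u$-$S$-finitely presented with respect to $s$. *)

From HB Require Import structures.
From mathcomp Require Import all_boot all_algebra.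
Set Implicit Arguments. Unset Strict Implicit. Unset Printing Implicit Defensive.
Import GRing.Theory.
Local Open Scope ring_scope.

Definition mult_subset (R : comPzRingType) (S : R -> Prop) : Prop :=
  S 1 /\ (forall a b, S a -> S b -> S (a * b)).

Section Mod.
Variable R : comPzRingType.

Definition is_submodule (V : lmodType R) (M : V -> Prop) : Prop :=
  [/\ M 0, (forall x y, M x -> M y -> M (x + y)) & (forall (a : R) x, M x -> M (a *: x))].

Definition span (V : lmodType R) (gs : seq V) : V -> Prop :=
  fun x => exists c : 'I_(size gs) -> R, x = \sum_(i < size gs) c i *: gs`_i.

Definition fin_gen (V : lmodType R) (K : V -> Prop) : Prop :=
  exists gs : seq V, forall x, K x <-> span gs x.

Definition sum_sub (V : lmodType R) (M N : V -> Prop) : V -> Prop :=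
  fun x => exists a b, M a /\ N b /\ x = a + b.

Definition cap_sub (V : lmodType R) (M N : V -> Prop) : V -> Prop :=
  fun x => M x /\ N x.

Definition S_finite_wrt (V : lmodType R) (M : V -> Prop) (s : R) : Prop :=
  exists gs : seq V, (forall x, span gs x -> M x) /\ (forall x, M x -> span gs (s *: x)).

Definition fin_presented (F : lmodType R) : Prop :=
  exists (n : nat) (f : {linear 'rV[R]_n -> F}),
    (forall y, exists v, f v = y) /\ fin_gen (fun v => f v = 0).

(* u-S-finitely presented w.r.t. s: exact 0 -> T1 -> F -> N -> T2 -> 0 with
   F finitely presented and s T1 = s T2 = 0; here T1 = ker g, T2 = coker g. *)
Definition uS_fin_pres (V : lmodType R) (N : V -> Prop) (s : R) : Prop :=
  exists (F : lmodType R) (g : {linear F -> V}),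
    [/\ fin_presented F,
        (forall x, N (g x)),
        (forall x, g x = 0 -> s *: x = 0) &
        (forall y, N y -> exists x, g x = s *: y)].

Definition uS_coherent (S : R -> Prop) (V : lmodType R) (M : V -> Prop) : Prop :=
  exists s, [/\ S s, S_finite_wrt M s &
    forall gs : seq V, (forall x, x \in gs -> M x) -> uS_fin_pres (span gs) s].

End Mod.

(* Inside a u-S-coherent module every finitely generated submodule is already
   u-S-finitely presented, so a submodule is u-S-coherent as soon as it is
   S-finite, and both sides of the equivalence hold.  For M ∩ N, present the span of the generators of M and N, up to
   s, by a linear map f = fM + fN : R^n -> V with fM, fN landing in M and N and
   with a finite set ks generating its kernel up to s.  Lift s-multiples of the
   generators of M and N along f; for x in M ∩ N this gives p, q with
   f p = tM x and f q = tN x, so k = tN p - tM q lies in the kernel and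
   s tN tM x = fM (s k) + s tN fN p + s tM fM q, a combination of elements of
   M ∩ N drawn from finitely many candidates. *)

From Pilot Require Import Defs.
From HB Require Import structures.
From mathcomp Require Import all_boot all_algebra.
Set Implicit Arguments. Unset Strict Implicit. Unset Printing Implicit Defensive.
Import GRing.Theory.
Local Open Scope ring_scope.
Local Notation span := Defs.span.

Section Submodule.
Variables (R : comPzRingType) (V : lmodType R) (P : V -> Prop).
Hypothesis subP : is_submodule P.

Lemma submodule0 : P 0.
Proof. by case: subP. Qed.

Lemma submoduleD x y : P x -> P y -> P (x + y).
Proof. by case: subP => _ PD _; apply: PD. Qed.

Lemma submoduleZ a x : P x -> P (a *: x).
Proof. by case: subP => _ _ PZ; apply: PZ. Qed.

Lemma submoduleN x : P x -> P (- x).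
Proof. by move=> Px; rewrite -scaleN1r; apply: submoduleZ. Qed.

Lemma submoduleB x y : P x -> P y -> P (x - y).
Proof. by move=> Px Py; apply: submoduleD => //; apply: submoduleN. Qed.

Lemma submodule_sum I (r : seq I) (Q : pred I) (F : I -> V) :
  (forall i, Q i -> P (F i)) -> P (\sum_(i <- r | Q i) F i).
Proof. by move=> PF; apply: big_ind => //; [apply: submodule0 | apply: submoduleD]. Qed.

End Submodule.

Section Span.
Variables (R : comPzRingType) (V : lmodType R).
Implicit Types (gs : seq V) (P : V -> Prop).

Lemma span_submodule gs : is_submodule (span gs).
Proof.
split.
- by exists (fun _ => 0); rewrite big1 // => i _; rewrite scale0r.
- move=> x y [c ->] [d ->]; exists (fun i => c i + d i).
  by rewrite -big_split; apply: eq_bigr => i _; rewrite scalerDl.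
- move=> a x [c ->]; exists (fun i => a * c i).
  by rewrite scaler_sumr; apply: eq_bigr => i _; rewrite scalerA.
Qed.

Lemma span_nth gs (i : 'I_(size gs)) : span gs gs`_i.
Proof.
exists (fun j => (j == i)%:R); rewrite (bigD1 i) //= eqxx scale1r big1 ?addr0 //.
by move=> j /negbTE ->; rewrite scale0r.
Qed.

Lemma span_mem gs x : x \in gs -> span gs x.
Proof.
by move=> gs_x; rewrite -(nth_index 0 gs_x); apply: (span_nth (Ordinal _)); rewrite index_mem.
Qed.

Lemma span_min gs P : is_submodule P -> (forall x, x \in gs -> P x) ->
  forall x, span gs x -> P x.
Proof.
move=> subP gsP x [c ->]; apply: submodule_sum => // i _.
by apply: submoduleZ => //; apply/gsP/mem_nth.
Qed.

Lemma span_subset gs1 gs2 : {subset gs1 <= gs2} -> forall x, span gs1 x -> span gs2 x.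
Proof. by move=> sub12; apply: span_min; [apply: span_submodule | move=> x /sub12/span_mem]. Qed.

Lemma span_catl gs1 gs2 x : span gs1 x -> span (gs1 ++ gs2) x.
Proof. by apply: span_subset => y; rewrite mem_cat => ->. Qed.

Lemma span_catr gs1 gs2 x : span gs2 x -> span (gs1 ++ gs2) x.
Proof. by apply: span_subset => y; rewrite mem_cat orbC => ->. Qed.

Lemma sum_submodule P Q : is_submodule P -> is_submodule Q -> is_submodule (sum_sub P Q).
Proof.
move=> subP subQ; split.
- by exists 0, 0; rewrite addr0; do !split; apply: submodule0.
- move=> _ _ [a [b [Pa [Qb ->]]]] [a' [b' [Pa' [Qb' ->]]]].
  by exists (a + a'), (b + b'); rewrite addrACA; do !split; apply: submoduleD.
- move=> c _ [a [b [Pa [Qb ->]]]].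
  by exists (c *: a), (c *: b); rewrite scalerDr; do !split; apply: submoduleZ.
Qed.

Lemma cap_submodule P Q : is_submodule P -> is_submodule Q -> is_submodule (cap_sub P Q).
Proof.
move=> subP subQ; split; first by split; apply: submodule0.
- by move=> x y [Px Qx] [Py Qy]; split; apply: submoduleD.
- by move=> a x [Px Qx]; split; apply: submoduleZ.
Qed.

Lemma span_cat_sum gs1 gs2 x : span (gs1 ++ gs2) x -> sum_sub (span gs1) (span gs2) x.
Proof.
apply: span_min; first by apply: sum_submodule; apply: span_submodule.
move=> y; rewrite mem_cat => /orP[] /span_mem gs_y; [exists y, 0 | exists 0, y].
all: rewrite ?addr0 ?add0r; do !split => //; apply: submodule0; apply: span_submodule.
Qed.

Lemma linear_preim_submodule (U : lmodType R) (f : {linear U -> V}) P :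
  is_submodule P -> is_submodule (fun w => P (f w)).
Proof.
move=> subP; split=> [|w w' Pw Pw'|a w Pw]; rewrite ?linear0 ?linearD ?linearZ.
- exact: submodule0.
- exact: submoduleD.
- exact: submoduleZ.
Qed.

End Span.

Section Finiteness.
Variables (R : comPzRingType) (V : lmodType R).

Lemma S_finite_wrtM (M : V -> Prop) s t : S_finite_wrt M s -> S_finite_wrt M (t * s).
Proof.
case=> gs [gsM Mgs]; exists gs; split=> // x /Mgs gs_sx.
by rewrite -scalerA; apply: submoduleZ => //; apply: span_submodule.
Qed.

Lemma uS_fin_presM (L : V -> Prop) s t : uS_fin_pres L s -> uS_fin_pres L (t * s).
Proof.
case=> F [g [Fpres gL gker gcoker]]; exists F, g; split => //.
- by move=> x /gker; rewrite -scalerA => ->; rewrite scaler0.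
- by move=> y /gcoker[x gx]; exists (t *: x); rewrite linearZ /= gx scalerA.
Qed.

Lemma S_finite_sum (M N : V -> Prop) sM sN :
  is_submodule M -> is_submodule N -> S_finite_wrt M sM -> S_finite_wrt N sN ->
  S_finite_wrt (sum_sub M N) (sM * sN).
Proof.
move=> subM subN [gsM [gsM_M M_gsM]] [gsN [gsN_N N_gsN]].
have subG := span_submodule (gsM ++ gsN).
exists (gsM ++ gsN); split.
- apply: span_min; first exact: sum_submodule.
  move=> y; rewrite mem_cat => /orP[] /span_mem gs_y; [exists y, 0 | exists 0, y].
  + by rewrite addr0; do !split => //; [exact: gsM_M | exact: submodule0].
  + by rewrite add0r; do !split => //; [exact: submodule0 | exact: gsN_N].
- move=> _ [a [b [Ma [Nb ->]]]]; rewrite scalerDr {1}mulrC -!scalerA.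
  apply: submoduleD => //; apply: submoduleZ => //.
  + exact/span_catl/M_gsM.
  + exact/span_catr/N_gsN.
Qed.

Lemma uS_coherent_of_S_finite (S : R -> Prop) (M : V -> Prop) s :
  mult_subset S -> uS_coherent S (fun _ : V => True) -> S s -> S_finite_wrt M s ->
  uS_coherent S M.
Proof.
move=> [_ mulS] [t [St _ presV]] Ss finM; exists (t * s); split.
- exact: mulS.
- exact: S_finite_wrtM.
- by move=> gs _; rewrite mulrC; apply/uS_fin_presM/presV.
Qed.

End Finiteness.

Section Presentation.
Variables (R : comPzRingType) (V : lmodType R).

Definition lincomb n (m : 'I_n -> V) (w : 'rV[R]_n) : V := \sum_j w 0 j *: m j.

Fact lincomb_is_linear n (m : 'I_n -> V) : linear (lincomb m).
Proof.
move=> a v w; rewrite /lincomb scaler_sumr -big_split; apply: eq_bigr => j _.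
by rewrite !mxE scalerDl scalerA.
Qed.

HB.instance Definition _ n (m : 'I_n -> V) :=
  GRing.isLinear.Build R 'rV[R]_n V *:%R (lincomb m) (lincomb_is_linear m).

Lemma linear_rV_lincomb n (f : {linear 'rV[R]_n -> V}) w :
  f w = lincomb (fun j => f 'e_j) w.
Proof.
by rewrite {1}(row_sum_delta w) linear_sum; apply: eq_bigr => j _; rewrite linearZ.
Qed.

Lemma uS_fin_pres_rV (L : V -> Prop) s : uS_fin_pres L s ->
  exists n (f : {linear 'rV[R]_n -> V}) (ks : seq 'rV[R]_n),
    [/\ forall w, L (f w), forall w, w \in ks -> f w = 0,
       forall w, f w = 0 -> span ks (s *: w)
      & forall y, L y -> exists w, f w = s *: y].
Proof.
case=> F [g [[n [f [f_onto [ks ker_f]]]] gL gker gcoker]].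
exists n, (g \o f), ks; split=> [w | w /span_mem/ker_f | w /gker | y /gcoker[x gx]] //=.
- by move=> ->; rewrite linear0.
- by rewrite -linearZ => /ker_f.
- by have [w fw] := f_onto x; exists w; rewrite /= fw.
Qed.

Lemma linear_rV_split n (A B : V -> Prop) (f : {linear 'rV[R]_n -> V}) :
  is_submodule A -> is_submodule B -> (forall w, sum_sub A B (f w)) ->
  exists fA fB : {linear 'rV[R]_n -> V},
    [/\ forall w, A (fA w), forall w, B (fB w) & forall w, f w = fA w + fB w].
Proof.
move=> subA subB fAB.
have /fin_all_exists[a /fin_all_exists[b ab]] := fun j => fAB 'e_j.
exists (lincomb a), (lincomb b); split=> w.
- by apply: submodule_sum => // j _; apply: submoduleZ => //; case: (ab j).
- by apply: submodule_sum => // j _; apply: submoduleZ => //; case: (ab j) => _ [].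
rewrite linear_rV_lincomb /lincomb -big_split; apply: eq_bigr => j _.
by case: (ab j) => _ [_ ->]; rewrite scalerDr.
Qed.

Lemma linear_lift_span (U : lmodType R) (f : {linear U -> V}) (gs : seq V) s :
  (forall y, y \in gs -> exists w, f w = s *: y) ->
  exists us : seq U, (forall w, w \in us -> exists2 y, y \in gs & f w = s *: y)
                  /\ (forall y, span gs y -> exists2 w, span us w & f w = s *: y).
Proof.
move=> gs_lift.
have /fin_all_exists[u fu] : forall i : 'I_(size gs), exists w, f w = s *: gs`_i.
  by move=> i; apply/gs_lift/mem_nth.
exists (codom u); split.
  by move=> _ /codomP[i ->]; exists gs`_i; rewrite ?mem_nth.
move=> _ [c ->]; exists (\sum_i c i *: u i).
  apply: (submodule_sum (span_submodule _)) => i _.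
  by apply: (submoduleZ (span_submodule _)); apply/span_mem/codom_f.
rewrite linear_sum scaler_sumr; apply: eq_bigr => i _.
by rewrite linearZ /= fu !scalerA mulrC.
Qed.

End Presentation.

Section Intersection.
Variables (R : comPzRingType) (U V : lmodType R) (M N : V -> Prop).
Variables (f fM fN : {linear U -> V}) (ks us vs : seq U) (s tM tN : R).
Hypotheses (subM : is_submodule M) (subN : is_submodule N).
Hypothesis f_split : forall w, f w = fM w + fN w.
Hypotheses (fM_M : forall w, M (fM w)) (fN_N : forall w, N (fN w)).
Hypothesis ks_ker : forall w, w \in ks -> f w = 0.
Hypothesis ker_f : forall w, f w = 0 -> span ks (s *: w).
Hypotheses (us_M : forall w, w \in us -> M (f w)) (vs_N : forall w, w \in vs -> N (f w)).
Hypothesis lift_M : forall x, M x -> exists2 p, span us p & f p = tM *: x.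
Hypothesis lift_N : forall x, N x -> exists2 q, span vs q & f q = tN *: x.

Let gens := map fM ks ++ map fN us ++ map fM vs.

Lemma cap_gens x : x \in gens -> cap_sub M N x.
Proof.
rewrite !mem_cat => /or3P[] /mapP[w w_in ->]; split; try exact: fM_M; try exact: fN_N.
- move/ks_ker: w_in => /eqP; rewrite f_split addr_eq0 => /eqP->.
  exact: (submoduleN subN).
- have -> : fN w = f w - fM w by rewrite f_split [fM w + _]addrC addrK.
  by apply: (submoduleB subM); [apply: us_M | apply: fM_M].
- have -> : fM w = f w - fN w by rewrite f_split addrK.
  by apply: (submoduleB subN); [apply: vs_N | apply: fN_N].
Qed.

Lemma cap_scale_span_gens x : cap_sub M N x -> span gens ((s * tN * tM) *: x).
Proof.
move=> [/lift_M[p us_p fp] /lift_N[q vs_q fq]].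
pose k := tN *: p - tM *: q.
have fk : f k = 0 by rewrite linearB !linearZ /= fp fq scalerN !scalerA mulrC subrr.
have gens_preim (g : {linear U -> V}) : is_submodule (fun w => span gens (g w)).
  exact: linear_preim_submodule (span_submodule gens).
have gens_k : span gens (fM (s *: k)).
  apply: (span_min (gens_preim fM) _ (ker_f fk)) => w ks_w.
  by apply/span_mem; rewrite !mem_cat map_f.
have gens_p : span gens (fN p).
  apply: (span_min (gens_preim fN) _ us_p) => w us_w.
  by apply/span_mem; rewrite !mem_cat (map_f fN us_w) orbT.
have gens_q : span gens (fM q).
  apply: (span_min (gens_preim fM) _ vs_q) => w vs_w.
  by apply/span_mem; rewrite !mem_cat (map_f fM vs_w) !orbT.
have fMp : fM p = tM *: x - fN p by rewrite -fp f_split addrK.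
have -> : (s * tN * tM) *: x = fM (s *: k) + (s * tN) *: fN p + (s * tM) *: fM q.
  rewrite !linearZ linearB !linearZ /= fMp scalerN !scalerBr !scalerA.
  by rewrite addrAC !subrK.
have subG := span_submodule gens.
by do 2?apply: (submoduleD subG) => //; apply: (submoduleZ subG).
Qed.

Lemma S_finite_cap_of_split : S_finite_wrt (cap_sub M N) (s * tN * tM).
Proof.
exists gens; split; last exact: cap_scale_span_gens.
exact: span_min (cap_submodule subM subN) cap_gens.
Qed.

End Intersection.

Lemma S_finite_cap (R : comPzRingType) (V : lmodType R) (M N : V -> Prop) sM sN s :
  is_submodule M -> is_submodule N -> S_finite_wrt M sM -> S_finite_wrt N sN ->
  (forall gs : seq V, uS_fin_pres (span gs) s) ->
  S_finite_wrt (cap_sub M N) (s * (s * sN) * (s * sM)).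
Proof.
move=> subM subN [gsM [gsM_M M_gsM]] [gsN [gsN_N N_gsN]] presV.
have [n [f [ks [f_span ks_ker ker_f f_lift]]]] := uS_fin_pres_rV (presV (gsM ++ gsN)).
have [fM [fN [fM_M fN_N f_split]]] := linear_rV_split (span_submodule gsM)
  (span_submodule gsN) (fun w => span_cat_sum (f_span w)).
have [us [us_gsM lift_gsM]] := linear_lift_span
  (fun y gsM_y => f_lift y (span_catl _ (span_mem gsM_y))).
have [vs [vs_gsN lift_gsN]] := linear_lift_span
  (fun y gsN_y => f_lift y (span_catr _ (span_mem gsN_y))).
apply: (S_finite_cap_of_split subM subN f_split _ _ ks_ker ker_f).
- by move=> w; apply/gsM_M/fM_M.
- by move=> w; apply/gsN_N/fN_N.
- move=> w /us_gsM[y /span_mem/gsM_M My ->]; exact: submoduleZ.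
- move=> w /vs_gsN[y /span_mem/gsN_N Ny ->]; exact: submoduleZ.
- by move=> x /M_gsM/lift_gsM[p us_p fp]; exists p; rewrite // fp scalerA.
- by move=> x /N_gsN/lift_gsN[q vs_q fq]; exists q; rewrite // fq scalerA.
Qed.

Theorem corollary3p4 (R : comPzRingType) (S : R -> Prop) (V : lmodType R)
    (M N : V -> Prop) :
  mult_subset S ->
  uS_coherent S (fun _ : V => True) ->
  is_submodule M -> is_submodule N ->
  uS_coherent S M -> uS_coherent S N ->
  (uS_coherent S (sum_sub M N) <-> uS_coherent S (cap_sub M N)).
Proof.
move=> multS cohV subM subN [sM [SsM finM _]] [sN [SsN finN _]].
have [s [Ss _ presV]] := cohV; have [_ mulS] := multS.
have finD := S_finite_sum subM subN finM finN.
have finI := S_finite_cap subM subN finM finN (fun gs => presV gs (fun _ _ => I)).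
have cohD := uS_coherent_of_S_finite multS cohV (mulS _ _ SsM SsN) finD.
have cohI : uS_coherent S (cap_sub M N).
  by apply: (uS_coherent_of_S_finite multS cohV _ finI); do !apply: (mulS).
by split.
Qed.
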